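(* Suppose there is a pair $(i,j)$ with $l_i=l'_j\neq 0$. Then every $t\in\frac{n+m}{2}+\mathbb Z$ is a pole of $\Gamma_{\mathbb R}(s-\kappa')\Gamma_{\mathbb R}(s-\kappa'+1)$ or of $\Gamma_{\mathbb R}(1-s+\kappa')\Gamma_{\mathbb R}(1-s+\kappa'+1)$, hence a pole of $L(s,\tau)$ or of $L(1-s,\check\tau)$. In particular $\mathrm{Crit}=\emptyset$.
   Context: Let $n,m\ge 1$ be integers, not both equal to $1$. For $N\ge1$ put $L_0^+(N):=\{(w,l)\in\mathbb Z\times\mathbb Z^N:\ l_1>l_2>\dots>l_N,\ l_i+l_{N+1-i}=0 \text{ for all } i,\ w+l_i\equiv N+1 \bmod 2 \text{ for all } i\}$. Fix $(w,l)\in L_0^+(n)$, $(w',l')\in L_0^+(m)$ and $\delta,\delta'\in\{0,1\}$. Representations of the Weil group $W_{\mathbb R}$ (Knapp's notation): for an integer $l\ge1$ and $t\in\mathbb C$, $(l,t)$ is the irreducible 2-dimensional representation, and for $\epsilon\in\{0,1\}$, $(\mathrm{sgn}^\epsilon,t)$ is the 1-dimensional one; $(0,t):=(\mathrm{sgn}^0,t)\oplus(\mathrm{sgn}^1,t)$. Their $L$-factors are $L(s,(l,t))=\Gamma_{\mathbb C}(s+t+\frac l2)$, $L(s,(\mathrm{sgn}^\epsilon,t))=\Gamma_{\mathbb R}(s+t+\epsilon)$, multiplicative in direct sums, where $\Gamma_{\mathbb R}(s)=\pi^{-s/2}\Gamma(s/2)$, $\Gamma_{\mathbb C}(s)=2(2\pi)^{-s}\Gamma(s)$.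 The contragredient of $(l,t)$ is $(l,-t)$ and that of $(\mathrm{sgn}^\epsilon,t)$ is $(\mathrm{sgn}^\epsilon,-t)$. Put $\pi^W:=\bigoplus_{i=1}^{\lfloor n/2\rfloor}(l_i,-w/2)$, plus the summand $(\mathrm{sgn}^\delta,-w/2)$ if $n$ is odd; define $\sigma^W$ analogously from $(w',l',\delta',m)$; and $\tau:=\pi^W\otimes\sigma^W$. A number $t\in\frac{n+m}{2}+\mathbb Z$ is called critical if neither $s\mapsto L(s,\tau)$ nor $s\mapsto L(1-s,\check\tau)$ has a pole at $s=t$; $\mathrm{Crit}$ denotes the set of critical numbers. $\kappa':=\frac12(w+w')$. *)

From HB Require Import structures.
From mathcomp Require Import all_boot all_order all_algebra.
Set Implicit Arguments. Unset Strict Implicit. Unset Printing Implicit Defensive.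
Import Order.TTheory GRing.Theory Num.Theory.
Local Open Scope ring_scope.

(* (w,l) in L_0^+(N), with l indexed by 'I_N (index i in 'I_N is l_{i+1}). *)
Definition inL0 (N : nat) (w : int) (l : 'I_N -> int) : Prop :=
  [/\ (forall i j : 'I_N, (i < j)%N -> l j < l i),
      (forall i : 'I_N, l i + l (rev_ord i) = 0) &
      (forall i : 'I_N, ((w + l i) %% 2)%Z = ((N.+1)%:Z %% 2)%Z)].

(* Irreducible representations of W_R in Knapp's notation:
   WC2 l t = (l,t) (2-dimensional, l >= 1), WR1 e t = (sgn^e, t).
   The parameters t are taken rational (all those occurring here are in 1/2 Z). *)
Inductive wirr : Type :=
| WC2 (l : nat) (t : rat)
| WR1 (e : bool) (t : rat).

(* A (semisimple) representation is a finite direct sum of irreducibles. *)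
Definition wrep := seq wirr.

(* (l,t) for l >= 0, with the convention (0,t) := (sgn^0,t) + (sgn^1,t). *)
Definition wpair (l : nat) (t : rat) : wrep :=
  if l == 0%N then [:: WR1 false t; WR1 true t] else [:: WC2 l t].

(* Tensor product of irreducibles (Knapp):
   (l,t) x (l',t') = (l+l', t+t') + (|l-l'|, t+t'),
   (l,t) x (sgn^e,t') = (l, t+t'),
   (sgn^e,t) x (sgn^e',t') = (sgn^(e+e'), t+t'). *)
Definition wtens_irr (x y : wirr) : wrep :=
  match x, y with
  | WC2 l t, WC2 l' t' => wpair (l + l') (t + t') ++ wpair (if (l <= l')%N then l' - l else l - l')%N (t + t')
  | WC2 l t, WR1 _ t' => [:: WC2 l (t + t')]
  | WR1 _ t, WC2 l' t' => [:: WC2 l' (t + t')]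
  | WR1 e t, WR1 e' t' => [:: WR1 (e (+) e') (t + t')]
  end.

Definition wtensor (r s : wrep) : wrep :=
  flatten [seq wtens_irr x y | x <- r, y <- s].

Definition wdual_irr (x : wirr) : wirr :=
  match x with WC2 l t => WC2 l (- t) | WR1 e t => WR1 e (- t) end.

Definition wdual (r : wrep) : wrep := map wdual_irr r.

(* pi^W = sum_{i=1}^{floor(N/2)} (l_i, -w/2)  (+ (sgn^delta, -w/2) if N odd). *)
Definition piW (N : nat) (w : int) (l : 'I_N -> int) (delta : bool) : wrep :=
  [seq WC2 `|l i|%N (- (w%:~R / 2)) | i <- [seq j <- enum 'I_N | (nat_of_ord j < N./2)%N]]
  ++ (if odd N then [:: WR1 delta (- (w%:~R / 2))] else [::]).

Definition Gamma_pole (z : rat) : Prop := exists k : nat, z = - k%:R.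
(* Gamma_R(s) = pi^(-s/2) Gamma(s/2);  Gamma_C(s) = 2 (2 pi)^(-s) Gamma(s). *)
Definition GammaR_pole (z : rat) : Prop := Gamma_pole (z / 2).
Definition GammaC_pole (z : rat) : Prop := Gamma_pole z.

(* L(s,(l,t)) = Gamma_C(s+t+l/2), L(s,(sgn^e,t)) = Gamma_R(s+t+e). *)
Definition Lirr_pole (x : wirr) (s : rat) : Prop :=
  match x with
  | WC2 l t => GammaC_pole (s + t + l%:R / 2)
  | WR1 e t => GammaR_pole (s + t + (e : nat)%:R)
  end.

(* L(s, rho) is the product of the factors; since Gamma has no zeros,
   it has a pole at s iff one of its factors does. *)
Fixpoint L_pole (r : wrep) (s : rat) : Prop :=
  match r with
  | [::] => False
  | x :: r' => Lirr_pole x s \/ L_pole r' s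
  end.

(* t in (n+m)/2 + Z, with K = n+m *)
Definition in_shift (K : nat) (t : rat) : Prop :=
  exists k : int, t = K%:R / 2 + k%:~R.

Definition critical (K : nat) (tau : wrep) (t : rat) : Prop :=
  [/\ in_shift K t, ~ L_pole tau t & ~ L_pole (wdual tau) (1 - t)].

From HB Require Import structures.
From mathcomp Require Import all_boot all_order all_algebra.
From mathcomp Require Import zify ring.
Set Implicit Arguments. Unset Strict Implicit.
Import Order.TTheory GRing.Theory Num.Theory.
Local Open Scope ring_scope.

(* If l_i = l'_j = a <> 0, then |a| occurs among the first floor(n/2) entries
   of l and of l', so tau contains (a, -w/2) (x) (a, -w'/2), which contains
   (0, -kappa') = (sgn^0, -kappa') + (sgn^1, -kappa').  Hence L(s, tau) has the
   factor Gamma_R(s - kappa') Gamma_R(s - kappa' + 1), and L(1 - s, tau^) the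
   factor Gamma_R(1 - s + kappa') Gamma_R(1 - s + kappa' + 1).  The parity
   conditions of L_0^+ force w + w' = n + m mod 2, so t - kappa' is an integer
   for t in (n+m)/2 + Z; and for every integer a, either a <= 0 or 1 - a <= 0,
   and then one of the two consecutive non-positive integers is even. *)

Lemma GammaR_pole_pair_nonpos (a : int) : a <= 0 ->
  GammaR_pole a%:~R \/ GammaR_pole (a%:~R + 1).
Proof.
move=> a_le0; have [N ->] : exists N : nat, a = - N%:Z by exists `|a|%N; lia.
have -> : (- N%:Z)%:~R = - ((odd N)%:R + 2 * (N./2)%:R) :> rat.
  by rewrite mulrNz -natrM -natrD mul2n {1}(odd_double_half N).
rewrite /GammaR_pole /Gamma_pole; case: (odd N) => /=.
- by right; exists N./2; field.
- by left; exists N./2; field.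
Qed.

Lemma GammaR_pole_pair_int (a : int) :
  (GammaR_pole a%:~R \/ GammaR_pole (a%:~R + 1)) \/
  (GammaR_pole (1 - a%:~R) \/ GammaR_pole (1 - a%:~R + 1)).
Proof.
have [a_le0 | a_gt0] := lerP a 0; first by left; apply: GammaR_pole_pair_nonpos.
right; have -> : 1 - a%:~R = (1 - a)%:~R :> rat by rewrite intrB.
by apply: GammaR_pole_pair_nonpos; lia.
Qed.

Lemma in_shift_sub_half (K : nat) (c : int) (t : rat) : in_shift K t ->
  exists a : int, t - (K%:Z + 2 * c)%:~R / 2 = a%:~R.
Proof.
case=> k ->; exists (k - c); rewrite intrD intrM intrB.
by rewrite -[K%:~R]/(K%:R) -[2%:~R]/(2 : rat); field.
Qed.

Lemma inL0_weights_parity (n m : nat) (w w' : int) (l : 'I_n -> int)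
    (l' : 'I_m -> int) (i : 'I_n) (j : 'I_m) :
  inL0 w l -> inL0 w' l' -> l i = l' j ->
  exists c : int, w + w' = (n + m)%N%:Z + 2 * c.
Proof.
case=> _ _ parity; case=> _ _ parity' lij.
have := parity i; have := parity' j; rewrite -lij => p' p.
by exists ((w + w' - (n + m)%N%:Z) %/ 2)%Z; lia.
Qed.

Lemma inL0_nonzero_first_half (N : nat) (w : int) (l : 'I_N -> int) (i : 'I_N) :
  inL0 w l -> l i <> 0 -> exists i0 : 'I_N, (i0 < N./2)%N /\ `|l i0|%N = `|l i|%N.
Proof.
case=> _ l_sym _ li_neq0.
have [lt_i_half | ge_i_half] := ltnP i N./2; first by exists i.
have [lt_ri_half | ge_ri_half] := ltnP (rev_ord i) N./2.
  exists (rev_ord i); split=> //.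
  by have := l_sym i; lia.
have mid_i : rev_ord i = i.
  apply: val_inj; move: ge_i_half ge_ri_half => /=.
  by have := odd_double_half N; have := ltn_ord i; rewrite -muln2; lia.
by have := l_sym i; rewrite mid_i; lia.
Qed.

Lemma In_mem (T : eqType) (x : T) (s : seq T) : x \in s -> List.In x s.
Proof.
elim: s => [|y s IHs] //=; rewrite in_cons => /orP [/eqP -> | x_in].
- by left.
- by right; apply: IHs.
Qed.

Lemma In_piW_nonzero (N : nat) (w : int) (l : 'I_N -> int) (delta : bool) (i : 'I_N) :
  inL0 w l -> l i <> 0 -> List.In (WC2 `|l i|%N (- (w%:~R / 2))) (piW w l delta).
Proof.
move=> wl li_neq0; have [i0 [lt_i0_half <-]] := inL0_nonzero_first_half wl li_neq0.
apply: List.in_or_app; left.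
apply: (List.in_map (fun k : 'I_N => WC2 `|l k|%N (- (w%:~R / 2)))).
by apply: In_mem; rewrite mem_filter mem_enum andbT lt_i0_half.
Qed.

Lemma In_flatten (T : Type) (ss : seq (seq T)) (s : seq T) (x : T) :
  List.In s ss -> List.In x s -> List.In x (flatten ss).
Proof.
elim: ss => [|s0 ss IHss] //= [-> | s_in] x_in; apply: List.in_or_app.
- by left.
- by right; apply: IHss.
Qed.

Lemma In_wtensor (A B : wrep) (x y z : wirr) :
  List.In x A -> List.In y B -> List.In z (wtens_irr x y) -> List.In z (wtensor A B).
Proof.
move=> xA yB; apply: In_flatten; apply: In_flatten (List.in_map _ _ _ xA) _.
exact: List.in_map (fun y => wtens_irr x y) _ _ yB.
Qed.

Lemma WR1_In_wtens_irr_same (a : nat) (t t' : rat) (e : bool) :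
  List.In (WR1 e (t + t')) (wtens_irr (WC2 a t) (WC2 a t')).
Proof.
rewrite /= leqnn subnn /wpair /=; apply: List.in_or_app; right.
by case: e; [right; left | left].
Qed.

Lemma L_pole_In (r : wrep) (x : wirr) (s : rat) :
  List.In x r -> Lirr_pole x s -> L_pole r s.
Proof. by elim: r => [|y r IHr] //= [-> | x_in] x_pole; [left | right; apply: IHr]. Qed.

Lemma L_pole_sgn_pair (r : wrep) (u s : rat) : (forall e, List.In (WR1 e u) r) ->
  GammaR_pole (s + u) \/ GammaR_pole (s + u + 1) -> L_pole r s.
Proof.
move=> sgn_in [pole | pole].
- by apply: L_pole_In (sgn_in false) _; rewrite /= addr0.
- exact: L_pole_In (sgn_in true) _.
Qed.

Theorem lemma2p4 (n m : nat) (w w' : int) (l : 'I_n -> int) (l' : 'I_m -> int)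
  (delta delta' : bool) :
  (0 < n)%N -> (0 < m)%N -> ~ (n = 1%N /\ m = 1%N) ->
  inL0 w l -> inL0 w' l' ->
  (exists (i : 'I_n) (j : 'I_m), l i = l' j /\ l i <> 0) ->
  let tau := wtensor (piW w l delta) (piW w' l' delta') in
  let kappa' : rat := (w + w')%:~R / 2 in
  (forall t : rat, in_shift (n + m) t ->
     ((GammaR_pole (t - kappa') \/ GammaR_pole (t - kappa' + 1)) \/
      (GammaR_pole (1 - t + kappa') \/ GammaR_pole (1 - t + kappa' + 1))) /\
     (L_pole tau t \/ L_pole (wdual tau) (1 - t))) /\
  (forall t : rat, ~ critical (n + m) tau t).
Proof.
move=> _ _ _ wl wl' [i [j [lij li_neq0]]] tau kappa'.
have tau_sgn e : List.In (WR1 e (- kappa')) tau.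
  have -> : - kappa' = - (w%:~R / 2) + - (w'%:~R / 2) by rewrite /kappa' intrD; field.
  apply: In_wtensor (In_piW_nonzero delta wl li_neq0) _ (WR1_In_wtens_irr_same _ _ _ _).
  by rewrite lij; apply: In_piW_nonzero wl' _; rewrite -lij.
have dual_sgn e : List.In (WR1 e kappa') (wdual tau).
  by rewrite -[kappa']opprK; apply: List.in_map wdual_irr _ _ (tau_sgn e).
have [c w_sum] := inL0_weights_parity wl wl' lij.
have poles t : in_shift (n + m) t ->
    ((GammaR_pole (t - kappa') \/ GammaR_pole (t - kappa' + 1)) \/
     (GammaR_pole (1 - t + kappa') \/ GammaR_pole (1 - t + kappa' + 1))) /\
    (L_pole tau t \/ L_pole (wdual tau) (1 - t)).
  move=> /(in_shift_sub_half c) [a t_sub]; rewrite -w_sum -/kappa' in t_sub.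
  have gamma_poles : (GammaR_pole (t - kappa') \/ GammaR_pole (t - kappa' + 1)) \/
      (GammaR_pole (1 - t + kappa') \/ GammaR_pole (1 - t + kappa' + 1)).
    have -> : 1 - t + kappa' = 1 - (t - kappa') by ring.
    by rewrite t_sub; apply: GammaR_pole_pair_int.
  split; first exact: gamma_poles.
  (* Fixing [s] keeps unification from unfolding the let-bound [tau] and [kappa']. *)
  case: gamma_poles => poles; [left | right].
  - exact: (L_pole_sgn_pair (s := t) tau_sgn poles).
  - exact: (L_pole_sgn_pair (s := 1 - t) dual_sgn poles).
split=> // t [t_shift no_pole no_dual_pole].
by case: (poles t t_shift) => _ [].
Qed.
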